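(* A causal graph dynamics $F:\mathcal{G}_{\Sigma,\Delta,\pi}\to\mathcal{G}_{\Sigma,\Delta,\pi}$ is monotonic for the subgraph order if and only if it is a left Kan extension, i.e. there exist $r\ge 0$ and a monotonic function $f:\mathcal{D}^r_{\Sigma,\Delta,\pi}\to\mathcal{G}_{\Sigma,\Delta,\pi}$ (subdisk order to subgraph order) such that for every graph $G$ the set $\{f(D)\mid D\in\mathcal{D}^r_{\Sigma,\Delta,\pi},\ i(D)\subseteq G\}$ has a supremum in $(\mathcal{G}_{\Sigma,\Delta,\pi},\subseteq)$ equal to $F(G)$, where $i((H,c))=H$ is the pointer dropping function.
   Context: Fix an uncountably infinite set $\mathcal{V}$ of vertex names, sets $\Sigma,\Delta$ and a finite port set $\pi$. A graph $G$: countable $V(G)\subset\mathcal{V}$; a set $E(G)$ of pairwise disjoint two-element subsets of $V(G)\times\pi$; partial labelings $\sigma(G):V(G)\rightharpoonup\Sigma$, $\delta(G):E(G)\rightharpoonup\Delta$. $\mathcal{G}_{\Sigma,\Delta,\pi}$ is the set of graphs. Subgraph order $G\subseteq H$: componentwise inclusion of $V,E,\sigma,\delta$ (partial functions as sets of pairs); for pointed graphs $(G,v)\subseteq(H,u)$ iff $G\subseteq H$ and $v=u$ (subdisk order). Consistency of two graphs: edge sets jointly pairwise disjoint and labelings agreeing on common domains; union and intersection are componentwise; $\varnothing$ is the empty graph. With $d_G$ the shortest-path distance and $B_G(c,r)$ the ball, the disk $G^r_c=(H,c)$ has $V(H)=B_G(c,r+1)$, $E(H)$ = edges of $G$ with an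 endpoint in $B_G(c,r)$, $\sigma(H)=\sigma(G)|_{B_G(c,r)}$, $\delta(H)=\delta(G)|_{E(H)}$; $\mathcal{D}^r_{\Sigma,\Delta,\pi}$ is the set of radius-$r$ disks. Renamings are bijections of $\mathcal{V}$ acting naturally on edges, graphs and pointed graphs. A local rule of radius $r$ is $f:\mathcal{D}^r\to\mathcal{G}$ satisfying: (1) every renaming $R$ has a renaming $R'$ with $f\circ R=R'\circ f$; (2) families of disks with empty intersection have images with empty intersection; (3) $|V(f(D))|$ uniformly bounded; (4) $f(G^r_u)$ and $f(G^r_v)$ consistent for all $G,u,v$. A CGD is $F(G)=\bigcup_{v\in V(G)}f(G^r_v)$ for some local rule $f$. *)

(* sets are predicates, partial functions are option-valued. *)
From Stdlib Require Import List Arith.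
Set Implicit Arguments.

Section CGD.
Variables (V Sigma Delta Pi : Type).

Definition endpt := (V * Pi)%type.

Definition countable_set (P : V -> Prop) : Prop :=
  exists g : V -> nat, forall x y, P x -> P y -> g x = g y -> x = y.

(* A graph.  An (undirected) edge {a,b} is represented by the symmetric,
   irreflexive relation gE; edge labels gdel are symmetric. *)
Record graph := Graph {
  gV   : V -> Prop;
  gE   : endpt -> endpt -> Prop;
  gsig : V -> option Sigma;
  gdel : endpt -> endpt -> option Delta;
  gV_countable : countable_set gV;
  gE_sym  : forall a b, gE a b -> gE b a;
  gE_irr  : forall a, ~ gE a a;                         (* two-element subsets *)
  gE_V    : forall a b, gE a b -> gV (fst a) /\ gV (fst b);
  gE_disj : forall a b c, gE a b -> gE a c -> b = c;    (* pairwise disjoint *)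
  gsig_dom : forall v s, gsig v = Some s -> gV v;
  gdel_sym : forall a b, gdel a b = gdel b a;
  gdel_dom : forall a b d, gdel a b = Some d -> gE a b
}.

Definition subgraph (G H : graph) : Prop :=
  (forall v, gV G v -> gV H v) /\
  (forall a b, gE G a b -> gE H a b) /\
  (forall v s, gsig G v = Some s -> gsig H v = Some s) /\
  (forall a b d, gdel G a b = Some d -> gdel H a b = Some d).

Definition pgraph := (graph * V)%type.
Definition psub (D1 D2 : pgraph) : Prop :=
  subgraph (fst D1) (fst D2) /\ snd D1 = snd D2.

Definition consistent (G H : graph) : Prop :=
  (forall a b c, (gE G a b \/ gE H a b) -> (gE G a c \/ gE H a c) -> b = c) /\
  (forall v s t, gsig G v = Some s -> gsig H v = Some t -> s = t) /\
  (forall a b d e, gdel G a b = Some d -> gdel H a b = Some e -> d = e).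

Definition inter_empty (S : graph -> Prop) : Prop :=
  (forall v, ~ (forall H, S H -> gV H v)) /\
  (forall a b, ~ (forall H, S H -> gE H a b)) /\
  (forall v s, ~ (forall H, S H -> gsig H v = Some s)) /\
  (forall a b d, ~ (forall H, S H -> gdel H a b = Some d)).

Definition is_union (S : graph -> Prop) (U : graph) : Prop :=
  (forall v, gV U v <-> exists H, S H /\ gV H v) /\
  (forall a b, gE U a b <-> exists H, S H /\ gE H a b) /\
  (forall v s, gsig U v = Some s <-> exists H, S H /\ gsig H v = Some s) /\
  (forall a b d, gdel U a b = Some d <-> exists H, S H /\ gdel H a b = Some d).

Definition is_lub (S : graph -> Prop) (U : graph) : Prop :=
  (forall H, S H -> subgraph H U) /\
  (forall U', (forall H, S H -> subgraph H U') -> subgraph U U').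

Definition adj (G : graph) (u w : V) : Prop :=
  exists p q, gE G (u, p) (w, q).

Inductive walk (G : graph) (u : V) : V -> nat -> Prop :=
  | walk0 : gV G u -> walk G u u 0
  | walkS : forall v w n, walk G u v n -> adj G v w -> walk G u w (S n).

Definition ball (G : graph) (c : V) (n : nat) (v : V) : Prop :=
  exists k, k <= n /\ walk G c v k.

Definition disk_of (G : graph) (r : nat) (c : V) (H : graph) : Prop :=
  (forall v, gV H v <-> ball G c (S r) v) /\
  (forall a b, gE H a b <-> (gE G a b /\ (ball G c r (fst a) \/ ball G c r (fst b)))) /\
  (forall v s, gsig H v = Some s <-> (gsig G v = Some s /\ ball G c r v)) /\
  (forall a b d, gdel H a b = Some d <-> (gdel G a b = Some d /\ gE H a b)).

Definition is_disk (r : nat) (D : pgraph) : Prop :=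
  exists G, gV G (snd D) /\ disk_of G r (snd D) (fst D).
Definition disk (r : nat) := { D : pgraph | is_disk r D }.

Definition ptr_drop (r : nat) (D : disk r) : graph := fst (proj1_sig D).

Definition renaming (R : V -> V) : Prop :=
  exists R1 : V -> V, (forall x, R1 (R x) = x) /\ (forall x, R (R1 x) = x).

Definition ren_endpt (R : V -> V) (a : endpt) : endpt := (R (fst a), snd a).

Definition renamed (R : V -> V) (G H : graph) : Prop :=
  (forall v, gV H (R v) <-> gV G v) /\
  (forall a b, gE H (ren_endpt R a) (ren_endpt R b) <-> gE G a b) /\
  (forall v, gsig H (R v) = gsig G v) /\
  (forall a b, gdel H (ren_endpt R a) (ren_endpt R b) = gdel G a b).

Definition renamed_p (R : V -> V) (D D' : pgraph) : Prop :=
  renamed R (fst D) (fst D') /\ snd D' = R (snd D).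

Definition local_rule (r : nat) (f : disk r -> graph) : Prop :=
  (forall R, renaming R -> exists R', renaming R' /\
     forall D D' : disk r, renamed_p R (proj1_sig D) (proj1_sig D') ->
       renamed R' (f D) (f D')) /\
  (forall Fam : disk r -> Prop,
     inter_empty (fun H => exists D, Fam D /\ H = ptr_drop D) ->
     inter_empty (fun H => exists D, Fam D /\ H = f D)) /\
  (exists b : nat, forall D, exists l : list V, length l <= b /\
     forall x, gV (f D) x -> In x l) /\
  (forall G u v (D1 D2 : disk r),
     gV G u -> gV G v ->
     snd (proj1_sig D1) = u -> disk_of G r u (ptr_drop D1) ->
     snd (proj1_sig D2) = v -> disk_of G r v (ptr_drop D2) ->
     consistent (f D1) (f D2)).

Definition is_CGD (F : graph -> graph) : Prop :=
  exists (r : nat) (f : disk r -> graph), local_rule f /\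
    forall G, is_union
      (fun H => exists v (D : disk r), gV G v /\ snd (proj1_sig D) = v /\
                  disk_of G r v (ptr_drop D) /\ H = f D) (F G).

Definition monotonic_graph_fun (F : graph -> graph) : Prop :=
  forall G H, subgraph G H -> subgraph (F G) (F H).

Definition left_kan_extension (F : graph -> graph) : Prop :=
  exists (r : nat) (f : disk r -> graph),
    (forall D1 D2 : disk r, psub (proj1_sig D1) (proj1_sig D2) -> subgraph (f D1) (f D2)) /\
    forall G, is_lub (fun H => exists D : disk r, subgraph (ptr_drop D) G /\ H = f D) (F G).

End CGD.

Definition uncountable (T : Type) : Prop :=
  ~ exists g : T -> nat, forall x y, g x = g y -> x = y.

Definition finite_type (T : Type) : Prop :=
  exists l : list T, forall x, In x l.

(* A monotone F is the left Kan extension of its own restriction D |-> F(i(D)) to disks.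
   Each piece f(G^r_v) of F(G) is also a piece of F(G^r_v), because a disk is its own
   disk around its centre; as G^r_v is a subgraph of G, every piece of F(G) lies below
   some F(i(D)) with i(D) a subgraph of G.  Conversely, a supremum over the disks below G
   grows with G. *)
From Stdlib Require Import Lia.
Set Implicit Arguments.

Section Graphs.
Variables (V Sigma Delta Pi : Type).
Notation graph := (graph V Sigma Delta Pi).

Lemma walk_gV_end (G : graph) u w k : walk G u w k -> gV G w.
Proof.
  induction 1 as [|v w n _ _ [p [q Hq]]]; auto.
  exact (proj2 (gE_V G _ _ Hq)).
Qed.

Lemma subgraph_refl (A : graph) : subgraph A A.
Proof. repeat split; auto. Qed.

Lemma subgraph_trans (A B C : graph) : subgraph A B -> subgraph B C -> subgraph A C.
Proof. intros [a1 [a2 [a3 a4]]] [b1 [b2 [b3 b4]]]. repeat split; auto. Qed.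

Lemma is_union_ub (S : graph -> Prop) U : is_union S U -> forall H, S H -> subgraph H U.
Proof.
  intros [UV [UE [Us Ud]]] H HS.
  repeat split; intros * HH; [apply UV | apply UE | apply Us | apply Ud]; eauto.
Qed.

Lemma is_union_least (S : graph -> Prop) U U' :
  is_union S U -> (forall H, S H -> subgraph H U') -> subgraph U U'.
Proof.
  intros [UV [UE [Us Ud]]] Hb. repeat split.
  - intros v Hv. apply UV in Hv as [H [HS Hv]]. now apply (Hb H HS).
  - intros a b Hab. apply UE in Hab as [H [HS Hab]]. now apply (Hb H HS).
  - intros v s Hv. apply Us in Hv as [H [HS Hv]]. now apply (Hb H HS).
  - intros a b d Hab. apply Ud in Hab as [H [HS Hab]]. now apply (Hb H HS).
Qed.

Lemma is_lub_le (S T : graph -> Prop) U W :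
  is_lub S U -> is_lub T W ->
  (forall H, S H -> exists K, T K /\ subgraph H K) -> subgraph U W.
Proof.
  intros [_ U_least] [W_ub _] HST. apply U_least.
  intros H HS. destruct (HST H HS) as [K [HK HHK]].
  exact (subgraph_trans HHK (W_ub K HK)).
Qed.

End Graphs.

Section Disks.
Variables (V Sigma Delta Pi : Type).
Notation graph := (graph V Sigma Delta Pi).
Variables (G H : graph) (r : nat) (c : V).
Hypothesis H_disk : disk_of G r c H.

Lemma disk_of_subgraph : subgraph H G.
Proof.
  destruct H_disk as [HV [HE [Hs Hd]]]. repeat split.
  - intros v Hv. apply HV in Hv as [k [_ Hk]]. exact (walk_gV_end Hk).
  - intros a b Hab. apply HE in Hab. tauto.
  - intros v s Hv. apply Hs in Hv. tauto.
  - intros a b d Hab. apply Hd in Hab. tauto.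
Qed.

Lemma disk_of_center : gV G c -> gV H c.
Proof. intro Hc. apply (proj1 H_disk). exists 0. split; [lia | now constructor]. Qed.

Lemma walk_disk_of : gV G c ->
  forall w k, walk G c w k -> k <= S r -> walk H c w k.
Proof.
  intros Hc w k Hw. induction Hw as [|v w n Hw IH [p [q Hq]]]; intros Hk.
  - constructor. exact (disk_of_center Hc).
  - apply walkS with v; [apply IH; lia |]. exists p, q.
    apply (proj1 (proj2 H_disk)). split; [exact Hq |].
    left. exists n. split; [lia | exact Hw].
Qed.

Lemma walk_of_disk w k : walk H c w k -> walk G c w k.
Proof.
  destruct disk_of_subgraph as [SV [SE _]].
  induction 1 as [|v w n _ IH [p [q Hq]]].
  - constructor. auto.
  - apply walkS with v; [exact IH |]. exists p, q. auto.
Qed.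

Lemma ball_disk_of : gV G c ->
  forall k w, k <= S r -> (ball H c k w <-> ball G c k w).
Proof.
  intros Hc k w Hk. split; intros [j [Hj Hw]]; exists j; split; auto.
  - exact (walk_of_disk Hw).
  - apply (walk_disk_of Hc Hw). lia.
Qed.

Lemma disk_of_disk : gV G c -> disk_of H r c H.
Proof.
  intro Hc. destruct H_disk as [HV [HE [Hs Hd]]].
  split; [| split; [| split]].
  - intro v. rewrite HV. symmetry. now apply ball_disk_of.
  - intros a b. split; [| tauto]. intro Hab. split; [exact Hab |].
    apply HE in Hab as [_ [B | B]]; [left | right]; apply ball_disk_of; auto.
  - intros v s. split; [| tauto]. intro Hv. split; [exact Hv |].
    apply ball_disk_of; [exact Hc | lia |]. apply Hs in Hv. tauto.
  - intros a b d. split; [| tauto]. intro Hab. split; [exact Hab |].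
    exact (gdel_dom H _ _ Hab).
Qed.

End Disks.

Section KanExtension.
Variables (V Sigma Delta Pi : Type).
Notation graph := (graph V Sigma Delta Pi).
Variable F : graph -> graph.

Lemma left_kan_extension_monotonic : left_kan_extension F -> monotonic_graph_fun F.
Proof.
  intros [r [f [_ Hlub]]] G H GH. apply (is_lub_le (Hlub G) (Hlub H)).
  intros K [D [DG ->]]. exists (f D). split; [| apply subgraph_refl].
  exists D. split; [exact (subgraph_trans DG GH) | reflexivity].
Qed.

Section FromCGD.
Variables (r : nat) (f : disk V Sigma Delta Pi r -> graph).
Hypothesis F_union : forall G, is_union
  (fun H => exists v (D : disk V Sigma Delta Pi r), gV G v /\ snd (proj1_sig D) = v /\
              disk_of G r v (ptr_drop D) /\ H = f D) (F G).

Lemma rule_le_image_of_disk G v (D : disk V Sigma Delta Pi r) :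
  gV G v -> snd (proj1_sig D) = v -> disk_of G r v (ptr_drop D) ->
  subgraph (f D) (F (ptr_drop D)).
Proof.
  intros Gv Dv HD. apply (is_union_ub (F_union (ptr_drop D))).
  exists v, D. split; [| split; [| split]]; auto.
  - exact (disk_of_center HD Gv).
  - exact (disk_of_disk HD Gv).
Qed.

Hypothesis F_monotonic : monotonic_graph_fun F.

Lemma monotonic_left_kan_extension : left_kan_extension F.
Proof.
  exists r, (fun D => F (ptr_drop D)). split.
  - intros D1 D2 [D12 _]. exact (F_monotonic D12).
  - intro G. split.
    + intros H [D [DG ->]]. exact (F_monotonic DG).
    + intros U' HU'. apply (is_union_least (F_union G)).
      intros H [v [D [Gv [Dv [HD ->]]]]].
      apply (subgraph_trans (rule_le_image_of_disk D Gv Dv HD)).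
      apply HU'. exists D. split; [exact (disk_of_subgraph HD) | reflexivity].
Qed.

End FromCGD.
End KanExtension.

Theorem corollary2p10 (V Sigma Delta Pi : Type)
  (HV : uncountable V) (HPi : finite_type Pi)
  (F : graph V Sigma Delta Pi -> graph V Sigma Delta Pi) :
  is_CGD F -> (monotonic_graph_fun F <-> left_kan_extension F).
Proof.
  intros [r [f [_ F_union]]]. split.
  - exact (monotonic_left_kan_extension f F_union).
  - apply left_kan_extension_monotonic.
Qed.
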